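(* Let $D\subset\mathbb R^n$ be a domain, $\mathcal D=(0,1)\times D$, $|c|<(n+1)\pi/2$, and suppose $u\in\mathcal F_c(\mathcal D)$. Then for each $t_0\in(0,1)$ the function $u(t_0,\cdot)$ belongs to $F_{c-\pi/2}(D)$.
   Context: $F_c=\{A\in\mathrm{Sym}(\mathbb R^n):\mathrm{tr}\tan^{-1}(A)\ge c\}$ ($\tan^{-1}\in(-\pi/2,\pi/2)$ via eigenvalues). For $A\in\mathrm{Sym}(\mathbb R^{n+1})$ (indices $0..n$, $t$ the $0$-th coordinate), $A^+$ is the lower right $n\times n$ block, $I_n=\mathrm{diag}(0,1,\dots,1)$, $\mathcal S=\{A=\mathrm{diag}(0,A^+)\}$, $\arg\in(-\pi,\pi]$; $\widetilde\Theta(A)=\sum_{\lambda\in\mathrm{spec}(I_n+\sqrt{-1}A)}m(\lambda)\arg\lambda$ for $A\notin\mathcal S$ (algebraic multiplicities), $\widetilde\Theta(A)=\pi/2+\mathrm{tr}\tan^{-1}(A^+)$ for $A\in\mathcal S$; $\mathcal F_c=\{A:\widetilde\Theta(A)\ge c\}$. For $F\subset\mathrm{Sym}(\mathbb R^m)$ with dual $\widetilde F=\mathrm{Sym}(\mathbb R^m)\setminus(-\mathrm{Int}F)$ and open $X$: upper semicontinuous $u$ is subaffine if for all compact $K\subset X$ and affine $a$, $u\le a$ on $\partial K$ implies $u\le a$ on $K$; $u\in F(X)$ if $u$ is upper semicontinuous and $u+v$ is subaffine for every $v\in C^2(X)$ with $\nabla^2v\in\widetilde F$ everywhere. *)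

From mathcomp Require Import all_boot all_fingroup.
From Stdlib Require Import Reals.
Set Implicit Arguments. Unset Strict Implicit.
Open Scope R_scope.

Definition vec (m : nat) := 'I_m -> R.
Definition mat (m : nat) := 'I_m -> 'I_m -> R.

Definition sumR (m : nat) (f : 'I_m -> R) : R := \big[Rplus/R0]_(i < m) f i.

Definition symmetric (m : nat) (A : mat m) : Prop := forall i j, A i j = A j i.

Definition idm (m : nat) : mat m := fun i j => if i == j then R1 else R0.

Definition detR (m : nat) (A : mat m) : R :=
  \big[Rplus/R0]_(s : 'S_m)
     ((if odd_perm s then -1 else 1) * \big[Rmult/R1]_(i < m) A i (s i)).

(* lam lists the eigenvalues of A with algebraic multiplicities:
   det(z I - A) = prod_k (z - lam_k) as polynomials (i.e. for all z) *)
Definition is_eigs_R (m : nat) (A : mat m) (lam : 'I_m -> R) : Prop :=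
  forall z : R, detR (fun i j => z * idm i j - A i j)
                = \big[Rmult/R1]_(k < m) (z - lam k).

Definition C := (R * R)%type.
Definition Cadd (a b : C) : C := (fst a + fst b, snd a + snd b).
Definition Cmul (a b : C) : C :=
  (fst a * fst b - snd a * snd b, fst a * snd b + snd a * fst b).
Definition Copp (a : C) : C := (- fst a, - snd a).
Definition C0 : C := (R0, R0).
Definition C1 : C := (R1, R0).
Definition cmat (m : nat) := 'I_m -> 'I_m -> C.

Definition detC (m : nat) (M : cmat m) : C :=
  \big[Cadd/C0]_(s : 'S_m)
     Cmul (if odd_perm s then Copp C1 else C1) (\big[Cmul/C1]_(i < m) M i (s i)).

(* mu lists the (complex) eigenvalues of M with algebraic multiplicities *)
Definition is_eigs_C (m : nat) (M : cmat m) (mu : 'I_m -> C) : Prop :=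
  forall z : C, detC (fun i j => Cadd (if i == j then z else C0) (Copp (M i j)))
                = \big[Cmul/C1]_(k < m) Cadd z (Copp (mu k)).

(* principal argument, with values in (-pi, pi]; (arg 0 := 0, never used) *)
Definition Carg (z : C) : R :=
  let x := fst z in let y := snd z in
  if Rlt_dec 0 x then atan (y / x)
  else if Rlt_dec x 0 then
    (if Rle_dec 0 y then atan (y / x) + PI else atan (y / x) - PI)
  else if Rlt_dec 0 y then PI / 2
  else if Rlt_dec y 0 then - (PI / 2) else 0.

(* F_c = { A in Sym(R^m) : tr tan^{-1}(A) >= c } *)
Definition Fc (m : nat) (c : R) (A : mat m) : Prop :=
  symmetric A /\
  exists lam, is_eigs_R A lam /\ c <= sumR (fun i => atan (lam i)).

(* matrices on R^{n+1}, index ord0 = the t-coordinate *)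
Definition Aplus (n : nat) (A : mat n.+1) : mat n :=
  fun i j => A (lift ord0 i) (lift ord0 j).
Definition inS (n : nat) (A : mat n.+1) : Prop :=
  forall i, A ord0 i = 0 /\ A i ord0 = 0.
(* I_n + sqrt(-1) A *)
Definition InA (n : nat) (A : mat n.+1) : cmat n.+1 :=
  fun i j => ((if (i == j) && (i != ord0) then R1 else R0), A i j).

Definition Theta_is (n : nat) (A : mat n.+1) (th : R) : Prop :=
  (inS A /\ exists lam, is_eigs_R (Aplus A) lam /\
                        th = PI / 2 + sumR (fun i => atan (lam i)))
  \/ (~ inS A /\ exists mu, is_eigs_C (InA A) mu /\
                        th = sumR (fun k => Carg (mu k))).

Definition FFc (n : nat) (c : R) (A : mat n.+1) : Prop :=
  symmetric A /\ exists th, Theta_is A th /\ c <= th.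

Definition mint (m : nat) (F : mat m -> Prop) (A : mat m) : Prop :=
  symmetric A /\ exists eps, 0 < eps /\
    forall B, symmetric B -> (forall i j, Rabs (B i j - A i j) < eps) -> F B.
Definition dual (m : nat) (F : mat m -> Prop) (A : mat m) : Prop :=
  symmetric A /\ ~ mint F (fun i j => - A i j).

Definition near (m : nat) (x y : vec m) (d : R) : Prop :=
  forall i, Rabs (y i - x i) < d.
Definition is_open (m : nat) (X : vec m -> Prop) : Prop :=
  forall x, X x -> exists d, 0 < d /\ forall y, near x y d -> X y.
Definition is_connected (m : nat) (X : vec m -> Prop) : Prop :=
  forall U V : vec m -> Prop, is_open U -> is_open V ->
    (forall x, X x -> U x \/ V x) -> (forall x, X x -> U x -> V x -> False) ->
    (exists x, X x /\ U x) -> (exists x, X x /\ V x) -> False.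
Definition is_domain (m : nat) (X : vec m -> Prop) : Prop :=
  is_open X /\ is_connected X /\ exists x, X x.
Definition is_compact (m : nat) (K : vec m -> Prop) : Prop :=
  forall (I : Type) (U : I -> vec m -> Prop), (forall i, is_open (U i)) ->
    (forall x, K x -> exists i, U i x) ->
    exists l : list I, forall x, K x -> exists i, List.In i l /\ U i x.
Definition interior (m : nat) (K : vec m -> Prop) (x : vec m) : Prop :=
  exists d, 0 < d /\ forall y, near x y d -> K y.
Definition closure (m : nat) (K : vec m -> Prop) (x : vec m) : Prop :=
  forall d, 0 < d -> exists y, near x y d /\ K y.
Definition boundary (m : nat) (K : vec m -> Prop) (x : vec m) : Prop :=
  closure K x /\ ~ interior K x.

(* ---------- functions with values in [-oo, +oo)  (None = -oo) ---------- *)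
Definition ele (a : option R) (r : R) : Prop :=
  match a with None => True | Some s => s <= r end.
Definition elt (a : option R) (r : R) : Prop :=
  match a with None => True | Some s => s < r end.
Definition eadd (a : option R) (r : R) : option R :=
  match a with None => None | Some s => Some (s + r) end.

Definition usc (m : nat) (X : vec m -> Prop) (u : vec m -> option R) : Prop :=
  forall x, X x -> forall M, elt (u x) M ->
    exists d, 0 < d /\ forall y, X y -> near x y d -> elt (u y) M.

Definition affine (m : nat) (a : vec m -> R) : Prop :=
  exists (b : R) (w : 'I_m -> R), forall x, a x = b + sumR (fun i => w i * x i).

Definition subaffine (m : nat) (X : vec m -> Prop) (u : vec m -> option R) : Prop :=
  usc X u /\
  forall (K : vec m -> Prop) (a : vec m -> R),
    is_compact K -> (forall x, K x -> X x) -> affine a ->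
    (forall x, boundary K x -> ele (u x) (a x)) ->
    forall x, K x -> ele (u x) (a x).

Definition evec (m : nat) (x : vec m) (i : 'I_m) (s : R) : vec m :=
  fun k => if k == i then x k + s else x k.
Definition cont_on (m : nat) (X : vec m -> Prop) (f : vec m -> R) : Prop :=
  forall x, X x -> forall e, 0 < e ->
    exists d, 0 < d /\ forall y, X y -> near x y d -> Rabs (f y - f x) < e.
Definition C2_hess (m : nat) (X : vec m -> Prop) (v : vec m -> R)
    (H : vec m -> mat m) : Prop :=
  exists Dv : 'I_m -> vec m -> R,
    (forall x, X x -> forall i,
        derivable_pt_lim (fun s => v (evec x i s)) 0 (Dv i x)) /\
    (forall x, X x -> forall i j,
        derivable_pt_lim (fun s => Dv i (evec x j s)) 0 (H x i j)) /\
    (forall i j, cont_on X (fun x => H x i j)).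

Definition inF (m : nat) (F : mat m -> Prop) (X : vec m -> Prop)
    (u : vec m -> option R) : Prop :=
  usc X u /\
  forall (v : vec m -> R) (H : vec m -> mat m), C2_hess X v H ->
    (forall x, X x -> dual F (H x)) ->
    subaffine X (fun x => eadd (u x) (v x)).

Definition pt (n : nat) (t : R) (x : vec n) : vec n.+1 :=
  fun i => match unlift ord0 i with Some j => x j | None => t end.
Definition cyl (n : nat) (D : vec n -> Prop) : vec n.+1 -> Prop :=
  fun p => 0 < p ord0 < 1 /\ D (fun j => p (lift ord0 j)).

(* Fix t0 and a C^2 test function v on D whose Hessian lies in the dual of
   F_{c - pi/2}.  For a > 0 the matrix I_n + i diag(a, B) has the eigenvalues
   i a and 1 + i lam_k(B), so Theta~(diag(a, B)) = pi/2 + tr atan B; hence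
   diag(-2N, D^2 v) lies in the dual of the cone F~_c and u + v(x) - N (t - t0)^2
   is subaffine on (0,1) x D for every N > 0.  Given a compact K in D and an
   affine a above u(t0, .) + v on the boundary of K, upper semicontinuity keeps
   u + v - (t - t0)^2 below a + e on the lateral boundary of a thin slab
   [t0 - d, t0 + d] x K, and a large N pushes the penalised function below
   a + e on its two faces; subaffinity on the slab gives u(t0, x) + v(x) <= a(x) + e. *)

From Stdlib Require Import Reals Lra FunctionalExtensionality ClassicalEpsilon.
From mathcomp Require Import all_boot all_fingroup all_algebra.
From mathcomp Require Import Rstruct complex.
From mathcomp Require ring.
Set Implicit Arguments. Unset Strict Implicit. Unset Printing Implicit Defensive.
Open Scope R_scope.

Definition block_diag n (a : R) (B : mat n) : mat n.+1 := fun i j =>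
  match unlift ord0 i, unlift ord0 j with
  | Some i', Some j' => B i' j'
  | None, None => a
  | _, _ => 0
  end.

Lemma block_diag00 n a (B : mat n) : block_diag a B ord0 ord0 = a.
Proof. by rewrite /block_diag unlift_none. Qed.

Lemma block_diag0l n a (B : mat n) j : block_diag a B ord0 (lift ord0 j) = 0.
Proof. by rewrite /block_diag unlift_none liftK. Qed.

Lemma block_diagl0 n a (B : mat n) i : block_diag a B (lift ord0 i) ord0 = 0.
Proof. by rewrite /block_diag unlift_none liftK. Qed.

Lemma block_diagll n a (B : mat n) i j :
  block_diag a B (lift ord0 i) (lift ord0 j) = B i j.
Proof. by rewrite /block_diag !liftK. Qed.

Lemma Carg_imag_pos b : 0 < b -> Carg (0, b) = PI / 2.
Proof.
move=> b0; rewrite /Carg /=.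
case: (Rlt_dec 0 0) => h00; first lra.
by case: (Rlt_dec 0 b).
Qed.

Lemma Carg_one_imag b : Carg (1, b) = atan b.
Proof.
rewrite /Carg /=; case: (Rlt_dec 0 1) => h01 /=; last lra.
by rewrite /Rdiv Rinv_1 Rmult_1_r.
Qed.

Section ComplexSpectrum.
Import GRing.Theory Num.Theory ring.
Local Open Scope ring_scope.
Local Open Scope complex_scope.

Definition complex_of (z : C) : R[i] := fst z +i* snd z.

Lemma complex_ofD a b : complex_of (Cadd a b) = complex_of a + complex_of b.
Proof. by []. Qed.

Lemma complex_ofM a b : complex_of (Cmul a b) = complex_of a * complex_of b.
Proof. by case: a => a1 a2; case: b. Qed.

Lemma complex_ofN a : complex_of (Copp a) = - complex_of a.
Proof. by []. Qed.

Lemma complex_of_fst_snd (w : R[i]) : complex_of (complex.Re w, complex.Im w) = w.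
Proof. by case: w. Qed.

Lemma detR_det m (A : mat m) : detR A = \det (\matrix_(i, j) A i j).
Proof.
apply: eq_bigr => s _; congr (_ * _).
  by case: (odd_perm s); rewrite /= ?expr1 ?expr0.
by apply: eq_bigr => i _; rewrite mxE.
Qed.

Lemma detC_det m (M : cmat m) :
  complex_of (detC M) = \det (\matrix_(i, j) complex_of (M i j)).
Proof.
rewrite /detC (big_morph complex_of complex_ofD (erefl : complex_of C0 = 0)).
apply: eq_bigr => s _; rewrite complex_ofM; congr (_ * _).
  by case: (odd_perm s); rewrite /= ?expr1 ?expr0.
rewrite (big_morph complex_of complex_ofM (erefl : complex_of C1 = 1)).
by apply: eq_bigr => i _; rewrite mxE.
Qed.

Lemma realsym_char_prod n (A : 'M[R[i]]_n) :
  A \is symmetricmx -> A \is a realmx ->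
  exists lam : 'I_n -> R, forall w, \det (w%:M - A) = \prod_k (w - (lam k)%:C).
Proof.
move=> Asym Areal.
have Aherm := realsym_hermsym Asym Areal.
have /orthomx_spectralP Adiag := hermitian_normalmx Aherm.
have dreal := hermitian_spectral_diag_real Aherm.
set P := spectralmx A in Adiag; set d := spectral_diag A in Adiag dreal.
have Punit : P \in unitmx by apply: spectral_unit.
exists (fun k => complex.Re (d 0 k)) => w.
have -> : w%:M - A = invmx P *m (w%:M - diag_mx d) *m P.
  rewrite {1}Adiag mulmxBr mulmxBl; congr (_ - _).
  by rewrite scalar_mxC -mulmxA mulVmx // mulmx1.
rewrite !det_mulmx det_inv mulrC mulrA mulrV ?unitmxE -?unitmxE // mul1r.
have -> : w%:M - diag_mx d = diag_mx (\row_k (w - d 0 k)).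
  by apply/matrixP => i j; rewrite !mxE; case: (i == j); rewrite ?mulr1n ?mulr0n ?subr0.
rewrite det_diag; apply: eq_bigr => k _; rewrite mxE; congr (_ - _).
have /mxOverP /(_ 0 k) := dreal.
case: (d 0 k) => x y; rewrite realE !lecE => /orP [] /andP [/eqP /= y0 _];
  by apply/eqP; rewrite eq_complex /= eqxx /= -y0.
Qed.

Definition cmx_of_mat n (B : mat n) : 'M[R[i]]_n := \matrix_(i, j) (B i j)%:C.

Lemma symmetric_eigs n (B : mat n) : symmetric B ->
  exists lam : 'I_n -> R, is_eigs_R B lam /\
    forall w, \det (w%:M - cmx_of_mat B) = \prod_k (w - (lam k)%:C).
Proof.
move=> Bsym; have [] := @realsym_char_prod n (cmx_of_mat B).
- apply/is_hermitianmxP; rewrite expr0 scale1r; apply/matrixP => i j.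
  by rewrite !mxE /= Bsym.
- apply/mxOverP => i j; rewrite mxE realE ler0c (lecR (B i j) 0).
  by rewrite -realE num_real.
move=> lam Hlam; exists lam; split => // z; apply: (@complexI R).
rewrite detR_det -det_map_mx.
have -> : \big[Rmult/R1]_(k < n) (z - lam k)%R = \prod_(k < n) (z - lam k) by [].
rewrite rmorph_prod; under eq_bigr do rewrite rmorphB.
rewrite -Hlam; congr (\det _); apply/matrixP => i j; rewrite !mxE /idm.
have R1E : R1 = 1 by []; have R0E : R0 = 0 by [].
by case: (i == j);
  rewrite /= ?mulr1n ?mulr0n rmorphB rmorphM ?R1E ?R0E ?rmorph1 ?rmorph0 ?mulr1 ?mulr0.
Qed.

Lemma poly_horner_inj (F : numDomainType) (p q : {poly F}) :
  (forall x, p.[x] = q.[x]) -> p = q.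
Proof.
move=> pq; apply/eqP; rewrite -subr_eq0; apply/eqP.
apply: (@roots_geq_poly_eq0 _ _ [seq (k%:R : F) | k <- iota 0 (size (p - q))]).
- by apply/allP => x _; rewrite /root !hornerE pq subrr.
- by rewrite map_inj_uniq ?iota_uniq // => a b /eqP; rewrite eqr_nat => /eqP.
- by rewrite size_map size_iota.
Qed.

Lemma char_InA_block_diag n a (B : mat n) (lam : 'I_n -> R) :
  (forall w, \det (w%:M - cmx_of_mat B) = \prod_k (w - (lam k)%:C)) ->
  forall w, \det (w%:M - \matrix_(i, j) complex_of (InA (block_diag a B) i j)) =
    (w - (0 +i* a)) * \prod_k (w - (1 +i* lam k)).
Proof.
move=> Blam w; rewrite (expand_det_row _ ord0) big_ord_recl /=.
rewrite big1 ?addr0; last first.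
  move=> j _; rewrite !mxE /InA block_diag0l.
  by rewrite mulr0n sub0r (_ : complex_of (R0, 0) = 0) // oppr0 mul0r.
rewrite !mxE /InA block_diag00 /= mulr1n; congr (_ * _).
rewrite /cofactor /= expr0 mul1r.
have shift (z : R[i]) b : 'i * (- 'i * (z - 1) - b%:C) = z - (1 +i* b).
  have -> : 1 +i* b = 1 + 'i * b%:C.
    by apply/eqP; rewrite eq_complex /=; apply/andP; split; apply/eqP; ring.
  transitivity (- ('i * 'i) * (z - 1) - 'i * b%:C); first ring.
  by rewrite -expr2 sqr_i; ring.
have -> : row' ord0 (col' ord0 (w%:M - \matrix_(i, j) complex_of (InA (block_diag a B) i j)))
    = 'i *: ((- 'i * (w - 1))%:M - cmx_of_mat B).
  apply/matrixP => i j; rewrite !mxE /InA /complex_of block_diagll (inj_eq lift_inj) /=.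
  case: (i == j); rewrite ?mulr1n ?mulr0n ?shift //.
  by apply/eqP; rewrite eq_complex /= (_ : R0 = 0) //; apply/andP; split; apply/eqP; ring.
rewrite detZ Blam -[in 'i ^+ n](card_ord n) -prodrMl; apply: eq_bigr => k _; exact: shift.
Qed.

Local Open Scope R_scope.
Lemma Theta_block_diag n (a : R) (B : mat n) th :
  0 < a -> symmetric B -> Theta_is (block_diag a B) th ->
  exists lam, is_eigs_R B lam /\ th = PI / 2 + sumR (fun i => atan (lam i)).
Local Close Scope R_scope.
Proof.
move=> a0 Bsym [[Bdiag _]|[_ [mu [Hmu ->]]]].
  by have [] := Bdiag ord0; rewrite block_diag00 => a00 _; exfalso; lra.
have [lam [Hlam Blam]] := symmetric_eigs Bsym.
exists lam; split => //.
have char_mu w : \det (w%:M - \matrix_(i, j) complex_of (InA (block_diag a B) i j))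
    = \prod_k (w - complex_of (mu k)).
  have := congr1 complex_of (Hmu (complex.Re w, complex.Im w)).
  rewrite detC_det (big_morph complex_of complex_ofM (erefl : complex_of C1 = 1)).
  under eq_bigr do rewrite complex_ofD complex_ofN complex_of_fst_snd.
  move=> <-; congr (\det _); apply/matrixP => i j; rewrite !mxE.
  by rewrite complex_ofD complex_ofN; congr (_ - _); case: (i == j); rewrite ?complex_of_fst_snd.
set s_mu := [seq complex_of (mu k) | k <- index_enum 'I_n.+1].
set s_lam := (0 +i* a) :: [seq 1 +i* lam k | k <- index_enum 'I_n].
have : perm_eq s_mu s_lam.
  apply: prod_XsubC_eq; apply: poly_horner_inj => x; rewrite !horner_prod.
  under eq_bigr do rewrite hornerXsubC.
  under [RHS]eq_bigr do rewrite hornerXsubC.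
  by rewrite big_cons !big_map -char_mu (char_InA_block_diag _ Blam).
move=> perm_mu; pose arg (z : R[i]) := Carg (complex.Re z, complex.Im z).
have -> : sumR (fun k => Carg (mu k)) = \sum_(z <- s_mu) arg z.
  by rewrite big_map; apply: eq_bigr => k _; rewrite /arg; case: (mu k).
rewrite (perm_big _ perm_mu) big_cons big_map /arg /= Carg_imag_pos //.
congr (_ + _); apply: eq_bigr => k _; exact: Carg_one_imag.
Qed.

End ComplexSpectrum.

Lemma block_diag_sym n a (B : mat n) : symmetric B -> symmetric (block_diag a B).
Proof.
move=> Bsym i j; case: (unliftP ord0 i) => [i'|] ->; case: (unliftP ord0 j) => [j'|] ->;
  by rewrite ?block_diagll ?block_diag0l ?block_diagl0 // Bsym.
Qed.

Lemma dual_block_diag n c N (H : mat n) : 0 < N ->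
  dual (Fc (c - PI / 2)) H -> dual (FFc c) (block_diag (- N) H).
Proof.
move=> N0 [Hsym Hnotint]; split; first exact: block_diag_sym.
move=> [_ [eps [eps0 Heps]]]; apply: Hnotint; split=> [i j|]; first by rewrite Hsym.
exists eps; split => // B Bsym HB.
have [i j|_ [th [Hth cth]]] := Heps (block_diag N B) (block_diag_sym N Bsym).
  case: (unliftP ord0 i) => [i'|] ->; case: (unliftP ord0 j) => [j'|] ->;
    rewrite ?block_diagll ?block_diag0l ?block_diagl0 ?block_diag00 //;
    by rewrite [X in Rabs X](_ : _ = 0) ?Rabs_R0 //; ring.
have [lam [Hlam thE]] := Theta_block_diag N0 Bsym Hth.
by split => //; exists lam; split => //; lra.
Qed.

Lemma list_pos_lower_bound {A : Type} (l : list A) (f : A -> R) :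
  (forall a, List.In a l -> 0 < f a) ->
  exists d, 0 < d /\ forall a, List.In a l -> d <= f a.
Proof.
elim: l => [|x l IH] fpos; first by exists 1; split; [lra|].
have [d [d0 Hd]] := IH (fun a la => fpos a (or_intror la)).
have fx := fpos x (or_introl erefl).
exists (Rmin d (f x)); split; first exact: Rmin_pos.
move=> a [<-|la]; first exact: Rmin_r.
exact: Rle_trans (Rmin_l _ _) (Hd a la).
Qed.

Lemma list_upper_bound {A : Type} (l : list A) (f : A -> R) :
  exists M, forall a, List.In a l -> f a <= M.
Proof.
elim: l => [|x l [M HM]]; first by exists 0.
exists (Rmax M (f x)) => a [<-|la]; first exact: Rmax_r.
exact: Rle_trans (HM a la) (Rmax_l _ _).
Qed.

Lemma ord_pos_lower_bound m (f : 'I_m -> R) : (forall i, 0 < f i) ->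
  exists d, 0 < d /\ forall i, d <= f i.
Proof.
move=> fpos; have [d [d0 Hd]] := list_pos_lower_bound (l := enum 'I_m) (fun a _ => fpos a).
exists d; split => // i; apply: Hd.
have : i \in enum 'I_m by rewrite mem_enum.
by elim: (enum 'I_m) => //= j s IH; rewrite inE => /orP [/eqP ->|/IH]; [left|right].
Qed.

Lemma near_refl m (x : vec m) r : 0 < r -> near x x r.
Proof. by move=> r0 i; rewrite Rminus_diag_eq // Rabs_R0. Qed.

Lemma near_trans m (x y z : vec m) r s :
  near x y r -> near y z s -> near x z (r + s).
Proof.
move=> xy yz i; have := Rabs_triang (z i - y i) (y i - x i).
by rewrite (_ : z i - y i + (y i - x i) = z i - x i); [have := xy i; have := yz i; lra | ring].
Qed.

Lemma near_le m (x y : vec m) r s : r <= s -> near x y r -> near x y s.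
Proof. by move=> rs xy i; have := xy i; lra. Qed.

Lemma is_open_near m (x : vec m) r : is_open (fun y => near x y r).
Proof.
move=> y xy.
have [d [d0 Hd]] := @ord_pos_lower_bound m (fun i => r - Rabs (y i - x i))
  (fun i => ltac:(have := xy i; lra)).
exists d; split => // z yz i; have := Rabs_triang (z i - y i) (y i - x i).
rewrite (_ : z i - y i + (y i - x i) = z i - x i); last ring.
by have := Hd i; have := yz i; lra.
Qed.

Lemma compact_ball_cover m (K : vec m -> Prop) (r : vec m -> R) :
  is_compact K -> (forall x, K x -> 0 < r x) ->
  exists xs : list (vec m), forall y, K y ->
    exists x, List.In x xs /\ K x /\ near x y (r x).
Proof.
move=> Kc rpos.
have [|y Ky|xs Hxs] := Kc (vec m) (fun x y => K x /\ near x y (r x)).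
- move=> x y [Kx xy]; have [d [d0 Hd]] := is_open_near xy.
  by exists d; split => // z yz; split; last exact: Hd.
- by exists y; split; last exact: near_refl (rpos y Ky).
exists xs => y Ky; have [x [xs_x [Kx xy]]] := Hxs y Ky.
by exists x.
Qed.

Lemma compact_closure m (K : vec m -> Prop) x : is_compact K -> closure K x -> K x.
Proof.
move=> Kc Kcl; apply: NNPP => Kx.
have [k y [i Hi]|y Ky|ks Hks] :=
  Kc nat (fun k y => exists i, / (INR k + 1) < Rabs (y i - x i)).
- exists (Rabs (y i - x i) - / (INR k + 1)); split; first lra.
  move=> z yz; exists i; have := yz i.
  have := Rabs_triang (y i - z i) (z i - x i).
  rewrite (_ : y i - z i + (z i - x i) = y i - x i); last ring.
  rewrite (Rabs_minus_sym (y i) (z i)); lra.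
- have [i yx] : exists i, y i <> x i.
    apply: NNPP => yx; apply: Kx.
    suff -> : x = y by [].
    apply: functional_extensionality => i; apply: NNPP => ne.
    by apply: yx; exists i => e; apply: ne.
  have yx0 : 0 < Rabs (y i - x i) by apply: Rabs_pos_lt; lra.
  have [k Hk] := INR_archimed (Rabs (y i - x i)) 1 yx0.
  exists k, i; have k0 := pos_INR k.
  apply: (Rmult_lt_reg_l (INR k + 1)); first lra.
  by rewrite Rinv_r; [nra | lra].
have [d [d0 Hd]] := list_pos_lower_bound (l := ks) (f := fun k => / (INR k + 1))
  (fun k _ => ltac:(apply: Rinv_0_lt_compat; have := pos_INR k; lra)).
have [y [xy Ky]] := Kcl d d0.
have [k [ks_k [i Hi]]] := Hks y Ky.
by have := Hd k ks_k; have := xy i; lra.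
Qed.

Lemma segment_ball_cover (al be : R) (r : R -> R) :
  (forall t, al <= t <= be -> 0 < r t) ->
  exists ts : list R, (forall t, List.In t ts -> al <= t <= be) /\
    forall s, al <= s <= be -> exists t, List.In t ts /\ Rabs (s - t) < r t.
Proof.
move=> rpos.
pose fam := mkfamily (fun t => al <= t <= be)
  (fun t s => al <= t <= be /\ Rabs (s - t) < r t) (fun t '(ex_intro _ (conj h _)) => h).
have [|Dts [cover [ts Hts]]] := compact_P3 al be fam.
  split=> [s Hs|t s /= [Ht ts]].
    by exists s; split => //=; rewrite Rminus_diag_eq // Rabs_R0; exact: rpos.
  have r0 : 0 < r t - Rabs (s - t) by lra.
  exists (mkposreal _ r0) => z /= zs; split => //; rewrite /disc /= in zs.
  have := Rabs_triang (z - s) (s - t).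
  by rewrite (_ : z - s + (s - t) = z - t); [lra | ring].
exists ts; split=> [t /Hts [] //|s Hs].
have [t [[Ht st] tin]] := cover s Hs.
by exists t; split => //; apply/Hts.
Qed.

Definition proj n (p : vec n.+1) : vec n := fun j => p (lift ord0 j).

Lemma proj_pt n t (x : vec n) : proj (pt t x) = x.
Proof. by apply: functional_extensionality => j; rewrite /proj /pt liftK. Qed.

Lemma pt_ord0 n t (x : vec n) : pt t x ord0 = t.
Proof. by rewrite /pt unlift_none. Qed.

Lemma pt_proj n (p : vec n.+1) : pt (p ord0) (proj p) = p.
Proof. by apply: functional_extensionality => k; rewrite /pt; case: unliftP => [j|] ->. Qed.

Lemma near_pt n t s (x y : vec n) r :
  Rabs (s - t) < r -> near x y r -> near (pt t x) (pt s y) r.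
Proof. by move=> ts xy k; rewrite /pt; case: unliftP. Qed.

Lemma near_proj n (p q : vec n.+1) r : near p q r -> near (proj p) (proj q) r.
Proof. by move=> pq j; apply: pq. Qed.

Definition slab n (al be : R) (K : vec n -> Prop) (p : vec n.+1) : Prop :=
  al <= p ord0 <= be /\ K (proj p).

Lemma slab_tube n (al be : R) I (U : I -> vec n.+1 -> Prop) (x : vec n) :
  (forall i, is_open (U i)) -> (forall t, al <= t <= be -> exists i, U i (pt t x)) ->
  exists (rho : R) (l : list I), 0 < rho /\ forall y, near x y rho ->
    forall t, al <= t <= be -> exists i, List.In i l /\ U i (pt t y).
Proof.
move=> Uopen cover.
have ball_at t : exists ir : option (I * R), al <= t <= be ->
    if ir is Some (i, r) then 0 < r /\ forall q, near (pt t x) q r -> U i q else False.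
  case: (classic (al <= t <= be)) => Ht; last by exists None.
  have [i Ui] := cover t Ht; have [r [r0 Hr]] := Uopen i _ Ui.
  by exists (Some (i, r)).
have [g Hg] := ClassicalEpsilon.choice _ ball_at.
pose rad t := if g t is Some (_, r) then r else 1.
pose idx t := if g t is Some (i, _) then [:: i] else [::].
have rad_pos t : al <= t <= be -> 0 < rad t.
  by move=> Ht; have := Hg t Ht; rewrite /rad; case: (g t) => [[i r] []|].
have [ts [ts_seg ts_cover]] := segment_ball_cover rad_pos.
have [rho [rho0 Hrho]] := list_pos_lower_bound (fun t ts_t => rad_pos t (ts_seg t ts_t)).
exists rho, (List.flat_map idx ts); split => // y xy t Ht.
have [s [ts_s st]] := ts_cover t Ht.
have := Hg s (ts_seg s ts_s); have := Hrho s ts_s; rewrite /rad /idx in st *.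
case E: (g s) st => [[i r]|] //= st rho_r [r0 Hr].
exists i; split; first by apply/List.in_flat_map; exists s; rewrite E; split => //; left.
by apply: Hr; apply: near_pt => //; exact: near_le rho_r xy.
Qed.

Lemma slab_compact n (al be : R) (K : vec n -> Prop) :
  is_compact K -> is_compact (slab al be K).
Proof.
move=> Kc I U Uopen cover.
have tube_at x : exists rl : R * list I, K x -> 0 < rl.1 /\
    forall y, near x y rl.1 -> forall t, al <= t <= be ->
      exists i, List.In i rl.2 /\ U i (pt t y).
  case: (classic (K x)) => Kx; last by exists (1, [::]).
  have [|rho [l [rho0 Hl]]] := @slab_tube n al be I U x Uopen.
    by move=> t Ht; apply: cover; rewrite /slab pt_ord0 proj_pt.
  by exists (rho, l).
have [F HF] := ClassicalEpsilon.choice _ tube_at.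
have [xs Hxs] := compact_ball_cover Kc (fun x Kx => proj1 (HF x Kx)).
exists (List.flat_map (fun x => (F x).2) xs) => p [Hp Kp].
have [x [xs_x [Kx xp]]] := Hxs _ Kp.
have [i [Fx_i Ui]] := (HF x Kx).2 _ xp (p ord0) Hp.
exists i; split; first by apply/List.in_flat_map; exists x.
by rewrite pt_proj in Ui.
Qed.

Lemma usc_bounded_above m (X K : vec m -> Prop) (f : vec m -> option R) :
  usc X f -> is_compact K -> (forall x, K x -> X x) ->
  exists M, forall x, K x -> ele (f x) M.
Proof.
move=> fusc Kc KX.
have bound_at x : exists dM : R * R, K x -> 0 < dM.1 /\
    forall y, X y -> near x y dM.1 -> elt (f y) dM.2.
  case: (classic (K x)) => Kx; last by exists (1, 0).
  pose M := if f x is Some s then s + 1 else 0.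
  have fxM : elt (f x) M by rewrite /M; case: (f x) => //= s; lra.
  have [d [d0 Hd]] := fusc x (KX x Kx) M fxM.
  by exists (d, M).
have [G HG] := ClassicalEpsilon.choice _ bound_at.
have [xs Hxs] := compact_ball_cover Kc (fun x Kx => proj1 (HG x Kx)).
have [M HM] := list_upper_bound xs (fun x => (G x).2).
exists M => y Ky; have [x [xs_x [Kx xy]]] := Hxs _ Ky.
have := (HG x Kx).2 y (KX y Ky) xy; have := HM x xs_x.
by case: (f y) => //= s; lra.
Qed.

Lemma sumR_sub m (f g : 'I_m -> R) : sumR f - sumR g = sumR (fun i => f i - g i).
Proof. exact: esym (GRing.sumrB _ _ _ _). Qed.

Lemma sumR_abs_le m (f g : 'I_m -> R) :
  (forall i, Rabs (f i) <= g i) -> Rabs (sumR f) <= sumR g.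
Proof.
move=> fg; apply: (big_ind2 (fun x y => Rabs x <= y)) => // [|x1 x2 y1 y2 h1 h2].
  by rewrite Rabs_R0; lra.
by have := Rabs_triang x1 y1; lra.
Qed.

Lemma affine_continuous m (a : vec m -> R) : affine a -> forall x e, 0 < e ->
  exists d, 0 < d /\ forall y, near x y d -> Rabs (a y - a x) < e.
Proof.
move=> [b [w Hw]] x e e0; set S := sumR (fun i => Rabs (w i)).
have S0 : 0 <= S.
  by apply: (big_ind (fun s => 0 <= s)) => [|s1 s2|i _]; [lra | lra | exact: Rabs_pos].
have d0 : 0 < e / (S + 1) by apply: Rdiv_lt_0_compat; lra.
exists (e / (S + 1)); split => // y xy.
rewrite !Hw (_ : b + _ - (b + _) = sumR (fun i => w i * y i) - sumR (fun i => w i * x i));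
  last ring.
rewrite sumR_sub; apply: Rle_lt_trans
  (sumR_abs_le (g := fun i => Rabs (w i) * (e / (S + 1))) _) _.
  move=> i; rewrite -Rmult_minus_distr_l Rabs_mult.
  by apply: Rmult_le_compat_l; [exact: Rabs_pos | have := xy i; lra].
rewrite (_ : sumR _ = S * (e / (S + 1))); last exact: esym (GRing.mulr_suml _ _ _ _).
apply: (Rmult_lt_reg_r (S + 1)); first lra.
by rewrite Rmult_assoc /Rdiv Rmult_assoc Rinv_l; nra.
Qed.

Lemma derivable_pt_lim_quadratic A B C :
  derivable_pt_lim (fun s => A + B * s + C * s ^ 2) 0 B.
Proof.
have := derivable_pt_lim_plus _ _ 0 _ _
  (derivable_pt_lim_plus _ _ 0 _ _ (derivable_pt_lim_const A 0)
     (derivable_pt_lim_scal id B 0 _ (derivable_pt_lim_id 0)))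
  (derivable_pt_lim_scal _ C 0 _ (derivable_pt_lim_pow 0 2)).
by rewrite [X in derivable_pt_lim _ _ X](_ : _ = B) //=; ring.
Qed.

Lemma evec_ord0 n (p : vec n.+1) s : evec p ord0 s ord0 = p ord0 + s.
Proof. by rewrite /evec eqxx. Qed.

Lemma evec_lift_ord0 n (p : vec n.+1) i s : evec p (lift ord0 i) s ord0 = p ord0.
Proof. by rewrite /evec (negbTE (neq_lift _ _)). Qed.

Lemma proj_evec_ord0 n (p : vec n.+1) s : proj (evec p ord0 s) = proj p.
Proof.
by apply: functional_extensionality => j; rewrite /proj /evec eq_sym (negbTE (neq_lift _ _)).
Qed.

Lemma proj_evec_lift n (p : vec n.+1) i s :
  proj (evec p (lift ord0 i) s) = evec (proj p) i s.
Proof. by apply: functional_extensionality => j; rewrite /proj /evec (inj_eq lift_inj). Qed.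

Definition penalize n (v : vec n -> R) t0 N (p : vec n.+1) : R :=
  v (proj p) - N * (p ord0 - t0) ^ 2.

Lemma penalize_pt n (v : vec n -> R) t0 N x : penalize v t0 N (pt t0 x) = v x.
Proof. by rewrite /penalize proj_pt pt_ord0; ring. Qed.

Lemma C2_hess_penalize n (D : vec n -> Prop) v H t0 N : C2_hess D v H ->
  C2_hess (cyl D) (penalize v t0 N) (fun p => block_diag (- (2 * N)) (H (proj p))).
Proof.
move=> [Dv [Dv_lim [H_lim H_cont]]].
exists (fun k p => if unlift ord0 k is Some i then Dv i (proj p)
                  else - (2 * N) * (p ord0 - t0)).
split; [|split].
- move=> p [_ Dp] k; case: (unliftP ord0 k) => [i|] ->.
    rewrite -[Dv i _]Rminus_0_r.
    apply: derivable_pt_lim_ext (derivable_pt_lim_minus _ _ 0 _ _ (Dv_lim _ Dp i)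
      (derivable_pt_lim_const (N * (p ord0 - t0) ^ 2) 0)) => s.
    by rewrite /penalize proj_evec_lift evec_lift_ord0.
  apply: derivable_pt_lim_ext (derivable_pt_lim_quadratic
    (penalize v t0 N p) (- (2 * N) * (p ord0 - t0)) (- N)) => s.
  by rewrite /penalize proj_evec_ord0 evec_ord0; ring.
- move=> p [_ Dp] k l.
  case: (unliftP ord0 k) => [i|] ->; case: (unliftP ord0 l) => [j|] ->;
    rewrite ?block_diagll ?block_diagl0 ?block_diag0l ?block_diag00.
  + by apply: derivable_pt_lim_ext (H_lim _ Dp i j) => s; rewrite proj_evec_lift.
  + apply: derivable_pt_lim_ext (derivable_pt_lim_quadratic (Dv i (proj p)) 0 0) => s.
    by rewrite proj_evec_ord0; ring.
  + apply: derivable_pt_lim_ext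
      (derivable_pt_lim_quadratic (- (2 * N) * (p ord0 - t0)) 0 0) => s.
    by rewrite evec_lift_ord0; ring.
  + apply: derivable_pt_lim_ext
      (derivable_pt_lim_quadratic (- (2 * N) * (p ord0 - t0)) (- (2 * N)) 0) => s.
    by rewrite evec_ord0; ring.
- move=> k l p [_ Dp] e e0.
  case: (unliftP ord0 k) => [i|] ->; case: (unliftP ord0 l) => [j|] ->.
  + have [d [d0 Hd]] := H_cont i j (proj p) Dp e e0.
    exists d; split => // q [_ Dq] pq; rewrite !block_diagll.
    exact: Hd Dq (near_proj pq).
  all: exists 1; split => [|q _ _]; first lra.
  all: by rewrite ?block_diagl0 ?block_diag0l ?block_diag00 Rminus_diag_eq // Rabs_R0.
Qed.

Lemma cyl_pt n (D : vec n -> Prop) t x : 0 < t < 1 -> D x -> cyl D (pt t x).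
Proof. by move=> t01 Dx; split; rewrite ?pt_ord0 // -/(proj (pt t x)) proj_pt. Qed.

Lemma usc_slice n (D : vec n -> Prop) (U : vec n.+1 -> option R) t0 :
  0 < t0 < 1 -> usc (cyl D) U -> usc D (fun x => U (pt t0 x)).
Proof.
move=> t01 Uusc x Dx M UM; have [d [d0 Hd]] := Uusc _ (cyl_pt t01 Dx) M UM.
exists d; split => // y Dy xy; apply: Hd; first exact: cyl_pt.
by apply: near_pt => //; rewrite Rminus_diag_eq // Rabs_R0.
Qed.

Lemma affine_proj n (a : vec n -> R) e :
  affine a -> affine (fun p : vec n.+1 => a (proj p) + e).
Proof.
move=> [b [w Hw]]; exists (b + e), (fun k => if unlift ord0 k is Some i then w i else 0).
move=> p; rewrite Hw /sumR big_ord_recl /= unlift_none.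
under [X in _ = _ + (_ + X)]eq_bigr do rewrite liftK.
by rewrite /proj; ring.
Qed.

Lemma affine_lower_bound m (a : vec m -> R) (K : vec m -> Prop) :
  affine a -> is_compact K -> exists l, forall y, K y -> l <= a y.
Proof.
move=> a_aff Kc.
have [|M HM] := @usc_bounded_above m K K (fun y => Some (- a y)) _ Kc (fun y Ky => Ky).
  move=> y _ M' /= ayM; have ayM0 : 0 < M' + a y by lra.
  have [d [d0 Hd]] := affine_continuous a_aff y ayM0.
  exists d; split => // z _ yz /=; have := Hd z yz.
  by have := Rle_abs (a y - a z); rewrite Rabs_minus_sym; lra.
by exists (- M) => y Ky; have := HM y Ky => /=; lra.
Qed.

Lemma slab_boundary n t0 de (K : vec n -> Prop) (p : vec n.+1) :
  is_compact K -> boundary (slab (t0 - de) (t0 + de) K) p ->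
  slab (t0 - de) (t0 + de) K p /\ (Rabs (p ord0 - t0) < de -> boundary K (proj p)).
Proof.
move=> Kc [Sp Snotint]; have Spp := compact_closure (slab_compact Kc) Sp.
split=> // pt0; split=> [d d0|[d [d0 Hd]]].
  by exists (proj p); split; [exact: near_refl | case: Spp].
apply: Snotint; exists (Rmin d (de - Rabs (p ord0 - t0))); split; first by apply: Rmin_pos; lra.
move=> q pq; split; last exact: Hd (near_le (Rmin_l _ _) (near_proj pq)).
have := pq ord0; have := Rmin_r d (de - Rabs (p ord0 - t0)).
have := Rabs_triang (q ord0 - p ord0) (p ord0 - t0).
rewrite (_ : q ord0 - p ord0 + (p ord0 - t0) = q ord0 - t0); last ring.
move=> h1 h2 h3; have qt0 : Rabs (q ord0 - t0) < de by lra.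
by have := Rle_abs (q ord0 - t0); have := Rle_abs (- (q ord0 - t0)); rewrite Rabs_Ropp; lra.
Qed.

Lemma usc_uniform_near_slice_boundary n (D K : vec n -> Prop) (a : vec n -> R)
    (U : vec n.+1 -> option R) t0 e :
  0 < e -> 0 < t0 < 1 -> is_compact K -> (forall x, K x -> D x) -> affine a ->
  usc (cyl D) U -> (forall x, boundary K x -> ele (U (pt t0 x)) (a x)) ->
  exists du, 0 < du /\ forall y t, boundary K y -> Rabs (t - t0) < du -> 0 < t < 1 ->
    elt (U (pt t y)) (a y + e).
Proof.
move=> e0 t01 Kc KD a_aff Uusc Ubd.
(* Around a boundary point of K upper semicontinuity applies; around an
   interior point take a ball whose double stays in K, so that no boundary
   point lies in it. *)
have local x : exists r, 0 < r /\ (K x ->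
    (forall q, cyl D q -> near (pt t0 x) q r -> elt (U q) (a x + e / 2)) /\
    (forall y, near x y r -> Rabs (a y - a x) < e / 2)
    \/ forall y, near x y (r + r) -> K y).
  case: (classic (K x)) => Kx; last by exists 1; split => //; lra.
  case: (classic (boundary K x)) => Kbd.
    have UM : elt (U (pt t0 x)) (a x + e / 2) by move: (Ubd x Kbd); case: (U _) => //= s; lra.
    have [d1 [d10 Hd1]] := Uusc _ (cyl_pt t01 (KD x Kx)) _ UM.
    have [d2 [d20 Hd2]] := affine_continuous a_aff x (ltac:(lra) : 0 < e / 2).
    exists (Rmin d1 d2); split=> [|_]; first exact: Rmin_pos.
    left; split=> [q Dq xq|y xy]; first exact: Hd1 Dq (near_le (Rmin_l _ _) xq).
    exact: Hd2 (near_le (Rmin_r _ _) xy).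
  have [d [d0 Hd]] : interior K x.
    apply: NNPP => Knotint; apply: Kbd; split => // d d0.
    by exists x; split; first exact: near_refl.
  exists (d / 2); split=> [|_]; first lra.
  by right => y xy; apply: Hd; apply: near_le xy; lra.
have [r Hr] := ClassicalEpsilon.choice _ local.
have [xs Hxs] := compact_ball_cover Kc (fun x _ => proj1 (Hr x)).
have [du [du0 Hdu]] := list_pos_lower_bound (l := xs) (fun x _ => proj1 (Hr x)).
exists du; split => // y t [Kcl Knotint] ty t01'.
have [x [xs_x [Kx xy]]] := Hxs y (compact_closure Kc Kcl).
case: ((Hr x).2 Kx) => [[Unear anear]|Kball].
  have Uy : elt (U (pt t y)) (a x + e / 2).
    apply: Unear; first exact: cyl_pt t01' (KD y (compact_closure Kc Kcl)).
    by apply: near_pt => //; have := Hdu x xs_x; lra.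
  have := anear y xy; have := Rle_abs (a x - a y); rewrite Rabs_minus_sym.
  by move: Uy; case: (U _) => //= s; lra.
case: Knotint; exists (r x); split=> [|z yz]; first exact: (Hr x).1.
exact: Kball _ (near_trans xy yz).
Qed.

Lemma ele_of_forall_pos (a : option R) r : (forall e, 0 < e -> ele a (r + e)) -> ele a r.
Proof.
case: a => //= s Hs; apply: Rnot_lt_le => rs.
by have := Hs ((s - r) / 2) ltac:(lra); lra.
Qed.

Lemma subaffine_slice n (D : vec n -> Prop) (U : vec n.+1 -> option R) t0 :
  0 < t0 < 1 -> usc (cyl D) U ->
  (forall N, 0 < N -> subaffine (cyl D) (fun p => eadd (U p) (- (N * (p ord0 - t0) ^ 2)))) ->
  subaffine D (fun x => U (pt t0 x)).
Proof.
move=> t01 Uusc Upen; split; first exact: usc_slice.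
move=> K a Kc KD a_aff Ubd x Kx; apply: ele_of_forall_pos => e e0.
have [du [du0 Hdu]] := usc_uniform_near_slice_boundary e0 t01 Kc KD a_aff Uusc Ubd.
set de := Rmin (du / 2) (Rmin (t0 / 2) ((1 - t0) / 2)).
have de_du : de <= du / 2 by apply: Rmin_l.
have de_t0 : de <= t0 / 2 by apply: Rle_trans (Rmin_r _ _) (Rmin_l _ _).
have de_1t0 : de <= (1 - t0) / 2 by apply: Rle_trans (Rmin_r _ _) (Rmin_r _ _).
have de0 : 0 < de by apply: Rmin_pos; [lra | apply: Rmin_pos; lra].
set S := slab (t0 - de) (t0 + de) K.
have SD q : S q -> cyl D q by move=> [q0 Kq]; split; [lra | exact: KD].
have [M HM] := usc_bounded_above Uusc (slab_compact Kc) SD.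
have [l Hl] := affine_lower_bound a_aff Kc.
set N := (Rabs M + Rabs l + 1) / (de * de).
have de2 : 0 < de * de by nra.
have N0 : 0 < N by apply: Rdiv_lt_0_compat => //; have := Rabs_pos M; have := Rabs_pos l; lra.
have Sbd_le p : boundary S p ->
    ele (eadd (U p) (- (N * (p ord0 - t0) ^ 2))) (a (proj p) + e).
  move=> Sbd; have [[p0 Kp] inner] := slab_boundary Kc Sbd.
  case: (Rlt_dec (Rabs (p ord0 - t0)) de) => pt0.
    have := Hdu (proj p) (p ord0) (inner pt0) ltac:(lra) (proj1 (SD p (conj p0 Kp))).
    rewrite pt_proj; have := Rmult_le_pos _ _ (Rlt_le _ _ N0) (pow2_ge_0 (p ord0 - t0)).
    by case: (U p) => //= s; lra.
  have far : de * de <= (p ord0 - t0) ^ 2.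
    by rewrite -Rsqr_pow2 (Rsqr_abs (p ord0 - t0)) /Rsqr; have := Rabs_pos (p ord0 - t0); nra.
  have ND : N * (de * de) = Rabs M + Rabs l + 1 by rewrite /N; field; lra.
  have := Rmult_le_compat_l _ _ _ (Rlt_le _ _ N0) far.
  have := HM p (conj p0 Kp); have := Hl _ Kp; have := Rle_abs M.
  have := Rle_abs (- l); rewrite Rabs_Ropp.
  by case: (U p) => //= s; lra.
have := (Upen N N0).2 S _ (slab_compact Kc) SD (affine_proj e a_aff) Sbd_le (pt t0 x).
have Sx : S (pt t0 x) by split; rewrite ?pt_ord0 ?proj_pt //; lra.
move=> /(_ Sx); rewrite proj_pt pt_ord0 Rminus_diag_eq //.
have -> : - (N * 0 ^ 2) = 0 by ring.
by case: (U _) => //= s; rewrite Rplus_0_r.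
Qed.

Lemma eadd_penalize n (v : vec n -> R) t0 M N (a : option R) p :
  eadd (eadd a (penalize v t0 M p)) (- (N * (p ord0 - t0) ^ 2))
  = eadd a (penalize v t0 (M + N) p).
Proof. by case: a => //= s; rewrite /penalize; f_equal; ring. Qed.

Theorem lemma9p1 (n : nat) (D : vec n -> Prop) (c : R) (u : vec n.+1 -> option R) :
  is_domain D ->
  Rabs c < INR n.+1 * PI / 2 ->
  inF (FFc c) (cyl D) u ->
  forall t0 : R, 0 < t0 < 1 ->
    inF (Fc (c - PI / 2)) D (fun x => u (pt t0 x)).
Proof.
move=> _ _ [u_usc u_sub] t0 t01; split; first exact: usc_slice.
move=> v H vC2 Hdual.
have u_pen N : 0 < N -> subaffine (cyl D) (fun p => eadd (u p) (penalize v t0 N p)).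
  move=> N0; apply: u_sub; first exact: (C2_hess_penalize t0 N vC2).
  by move=> p [_ Dp]; apply: dual_block_diag; [lra | exact: Hdual].
have -> : (fun x => eadd (u (pt t0 x)) (v x)) =
    (fun x => eadd (u (pt t0 x)) (penalize v t0 1 (pt t0 x))).
  by apply: functional_extensionality => x; rewrite penalize_pt.
apply: subaffine_slice t01 (u_pen 1 Rlt_0_1).1 _ => N N0.
have -> : (fun p => eadd (eadd (u p) (penalize v t0 1 p)) (- (N * (p ord0 - t0) ^ 2)))
    = (fun p => eadd (u p) (penalize v t0 (1 + N) p)).
  by apply: functional_extensionality => p; rewrite eadd_penalize.
by apply: u_pen; lra.
Qed.
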